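(* Assume the network is regular. Define a relation $\approx$ on $\mathcal E$ by $j_1\approx j_2$ iff $j_1=j_2$, or ($j_1\leadsto j_2$ and $j_2\leadsto j_1$). Then: (a) $\approx$ is an equivalence relation on $\mathcal E$. (b) If $\varphi$ is an equivalence class with at least two elements, then $j\leadsto j'$ for all $j,j'\in\varphi$ (including $j=j'$). (c) If $j_1\leadsto j_2$ and $j_1\not\approx j_2$, then for all $j_1'\approx j_1$ and $j_2'\approx j_2$ one has $j_1'\leadsto j_2'$ and $j_2'\not\leadsto j_1'$. Consequently, the relation on equivalence classes ''$\varphi\prec\varphi'$ iff $\varphi\neq\varphi'$ and some element of $\varphi$ influences some element of $\varphi'$'' is a strict partial order, and for $j^*\in\varphi^*$, $j'\ne j^*$: $j^*\leadsto j'$ iff $j'\in\varphi^*$ or $\varphi^*\prec\varphi'$, where $\varphi'$ is the class of $j'$. (d) For $j\in\mathcal E$ let $I_{\mathcal M}(j)=\{m\in\mathcal M: j\leadsto m\}$. If $j_1\leadsto j_2$ then $I_{\mathcal M}(j_1)\supseteq I_{\mathcal M}(j_2)$; if $j_1\approx j_2$ then $I_{\mathcal M}(j_1)=I_{\mathcal M}(j_2)$. (e) For $j^*\in\mathcal E$ with class $\varphi^*$, let $\mathcal M^{\neg d}(j^* )=\{m'\in\mathcal M:\ j^*\leadsto j'\leadsto m' \text{ for some } j'\notin\varphi^*\}$ and $\mathcal M^d(j^* )=I_{\mathcal M}(j^* )\setminus\mathcal M^{\neg d}(j^* )$. Then $\mathcal M^{\neg d}(j^* )\subseteq I_{\mathcal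 M}(j^* )$, and $j^*\leadsto m'$ iff either $m'\in\mathcal M^d(j^* )$, or $m'\in\mathcal M^d(j')$ for some $j'\notin\varphi^*$ with $j^*\leadsto j'$; i.e. $I_{\mathcal M}(j^* )=\mathcal M^d(j^* )\cup\bigcup_{j^*\leadsto j'\notin\varphi^*}\mathcal M^d(j')$.
   Context: A reaction network consists of a finite set of metabolites $\mathcal M=\{1,\dots,M\}$ and a finite set of reactions $\mathcal E=\{1,\dots,E\}$. Each reaction $j$ has an input stoichiometric vector $y^j\in\mathbb R_{\ge0}^M$ and an output stoichiometric vector $\bar y^j\in\mathbb R_{\ge0}^M$. Write $m\vdash j$ iff $y^j_m\neq 0$. The stoichiometric matrix $S$ is the real $M\times E$ matrix whose $j$-th column is $S^j=\bar y^j-y^j$; it is assumed to have full rank $M$. The rate matrix $R=(r_{jm})$ is the $E\times M$ matrix whose entries $r_{jm}$ with $m\vdash j$ are independent indeterminates, and $r_{jm}=0$ whenever $m\not\vdash j$. ''Nonzero algebraically'' means nonzero as a polynomial/rational function in these indeterminates. The network is regular if $\det(SR)\ne0$ algebraically. Let $B=\begin{pmatrix}-\mathrm{id}_{\mathcal E}&R\\ S&0\end{pmatrix}$, a square matrix with rows and columns indexed by the disjoint union $\mathcal E\sqcup\mathcal M$; for a regular network it is invertible over the field of rational functions in the $r_{jm}$. For $\alpha\in\mathcal E\sqcup\mathcal M$ set $z^\alpha=-B^{-1}e_\alpha$, and write $\alpha\leadsto\beta$ for $\beta\in\mathcal E\sqcup\mathcal M$ if $z^\alpha_\beta$ is nonzero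 algebraically. *)

From HB Require Import structures.
From mathcomp Require Import all_boot all_order all_algebra.
Set Implicit Arguments. Unset Strict Implicit. Unset Printing Implicit Defensive.
Import Order.TTheory GRing.Theory Num.Theory.
Local Open Scope ring_scope.

(* Polynomial ring in n indeterminates over an integral domain R,
   built as iterated univariate polynomials: R[X_0][X_1]...[X_(n-1)]. *)
Fixpoint mpoly (R : idomainType) (n : nat) : idomainType :=
  match n with
  | 0 => R
  | n'.+1 => GRing.IntegralDomain.clone {poly (mpoly R n')} _
  end.

(* The k-th indeterminate X_k (k < n); X_k = 0 if k >= n, never used. *)
Fixpoint mvar (R : idomainType) (n : nat) (k : nat) : mpoly R n :=
  match n return mpoly R n with
  | 0 => 0
  | n'.+1 => if k == n' then 'X else (mvar R n' k)%:P
  end.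

Fixpoint mconst (R : idomainType) (n : nat) (c : R) : mpoly R n :=
  match n return mpoly R n with
  | 0 => c
  | n'.+1 => (mconst n' c)%:P
  end.

Section Network.
Variables (R : realFieldType) (M E : nat).
(* y m j = y^j_m (input stoichiometry), ybar m j = ybar^j_m (output). *)
Variables (y ybar : 'M[R]_(M, E)).

Definition stoich : 'M[R]_(M, E) := ybar - y.

Definition inputs (m : 'I_M) (j : 'I_E) : bool := y m j != 0.

(* number of indeterminates: one r_{jm} for each pair (j,m), indexed j*M+m *)
Definition nvars : nat := (E * M)%N.

Definition ratfun : fieldType := {fraction (mpoly R nvars)}.

Definition toK (p : mpoly R nvars) : ratfun := FracField.tofrac p.

Definition rate : 'M[ratfun]_(E, M) :=
  \matrix_(j < E, m < M)
    (if inputs m j then toK (mvar R nvars (j * M + m)%N) else 0).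

Definition stoichK : 'M[ratfun]_(M, E) :=
  map_mx (fun c => toK (mconst nvars c)) stoich.

Definition regular : bool := \det (stoichK *m rate) != 0.

Definition Bmat : 'M[ratfun]_(E + M) := block_mx (- 1%:M) rate stoichK 0.

Definition rxn (j : 'I_E) : 'I_(E + M) := lshift M j.
Definition met (m : 'I_M) : 'I_(E + M) := rshift E m.

Definition zvec (a : 'I_(E + M)) : 'cV[ratfun]_(E + M) :=
  - (invmx Bmat *m delta_mx a (0 : 'I_1)).

Definition influences (a b : 'I_(E + M)) : bool := zvec a b 0 != 0.

Definition inflEE (j1 j2 : 'I_E) : bool := influences (rxn j1) (rxn j2).
Definition inflEM (j : 'I_E) (m : 'I_M) : bool := influences (rxn j) (met m).

Definition approx (j1 j2 : 'I_E) : bool :=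
  (j1 == j2) || (inflEE j1 j2 && inflEE j2 j1).

Definition eclass (j : 'I_E) : {set 'I_E} := [set j' | approx j j'].

Definition prec (phi phi' : {set 'I_E}) : bool :=
  (phi != phi') && [exists j in phi, exists j' in phi', inflEE j j'].

Definition IM (j : 'I_E) : {set 'I_M} := [set m | inflEM j m].

Definition Mnd (js : 'I_E) : {set 'I_M} :=
  [set m | [exists j', [&& j' \notin eclass js, inflEE js j' & inflEM j' m]]].

Definition Md (js : 'I_E) : {set 'I_M} := IM js :\: Mnd js.

End Network.

From HB Require Import structures.
From mathcomp Require Import all_boot all_order all_algebra.
From mathcomp Require Import zify.
Import Order.TTheory GRing.Theory Num.Theory.
Local Open Scope ring_scope.

(* Over the polynomial ring in the r_{jm}, B^-1 = adj B / det B, so a ~> b iff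
   the polynomial adj(B)_{b a} is nonzero.  Influence between reactions is
   transitive: if j1 ~> j2 ~> b but adj(B)_{b j1} = 0, differentiate
   B adj B = det B in r_{j2 m}, which moves only the entry (j2, m) of B; this gives
   adj(B)_{b j2} adj(B)_{m j1} = 0, hence adj(B)_{m j1} = 0 for every input m of
   j2, and the row j2 of B adj B = det B then reads adj(B)_{j2 j1} = 0.
   The rest is order theory of a transitive relation on reactions together with a
   compatible relation to metabolites: a metabolite reached through other classes
   is a direct target of a most downstream intermediate reaction. *)

Section PartialDerivative.
Variable R : idomainType.

Fixpoint mderiv (n k : nat) : mpoly R n -> mpoly R n :=
  match n return mpoly R n -> mpoly R n with
  | 0 => fun _ => 0
  | n'.+1 => fun p =>
      if k == n' then deriv (p : {poly mpoly R n'})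
      else map_poly (mderiv n' k) (p : {poly mpoly R n'})
  end.

Lemma mderiv0 n k : mderiv n k 0 = 0.
Proof.
elim: n => [//|n IHn] /=; case: (k == n); first exact: (@deriv0 (mpoly R n)).
by apply/polyP => i; rewrite coef_map_id0 // coef0 IHn.
Qed.

Lemma mderivD n k : {morph mderiv n k : p q / p + q}.
Proof.
elim: n => [|n IHn] p q /=; first by rewrite addr0.
case: (k == n); first exact: (@derivD (mpoly R n)).
by apply/polyP => i; rewrite coefD !coef_map_id0 ?mderiv0 // coefD IHn.
Qed.

Lemma mderivN n k p : mderiv n k (- p) = - mderiv n k p.
Proof. by apply/eqP; rewrite -addr_eq0 -mderivD addNr mderiv0. Qed.

Lemma mderivM n k p q :
  mderiv n k (p * q) = mderiv n k p * q + p * mderiv n k q.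
Proof.
elim: n p q => [|n IHn] p q /=; first by rewrite mul0r mulr0 addr0.
case: (k == n); first exact: (@derivM (mpoly R n)).
apply/polyP => i; rewrite coef_map_id0 ?mderiv0 // coefD !coefM.
rewrite (big_morph _ (mderivD n k) (mderiv0 n k)) -big_split /=.
by apply: eq_bigr => j _; rewrite IHn !coef_map_id0 ?mderiv0.
Qed.

Lemma mderiv1 n k : mderiv n k 1 = 0.
Proof.
have := mderivM n k 1 1; rewrite !mul1r mulr1 => h.
by apply: (addrI (mderiv n k 1)); rewrite addr0 -h.
Qed.

Lemma mderivC n k c : mderiv n k (mconst n c) = 0.
Proof.
elim: n => [//|n IHn] /=; case: (k == n); first exact: (@derivC (mpoly R n)).
apply/polyP => i; rewrite coef_map_id0 ?mderiv0 // !coefC.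
by case: (i == 0)%N; rewrite ?IHn ?mderiv0.
Qed.

Lemma mderivX n k k' : (k < n)%N -> (k' < n)%N ->
  mderiv n k (mvar R n k') = (k' == k)%:R.
Proof.
elim: n => [//|n IHn] ltkn ltk'n /=.
have [->|nekn] := eqVneq k n.
  by case: (k' == n); [exact: (@derivX (mpoly R n)) | exact: (@derivC (mpoly R n))].
have ltkn' : (k < n)%N by rewrite ltn_neqAle nekn -ltnS.
apply/polyP => i; rewrite coef_map_id0 ?mderiv0 //.
have [ek'n|nek'n] := eqVneq k' n.
  rewrite coefX ek'n [n == k]eq_sym (negbTE nekn) coef0.
  by case: (i == 1)%N; rewrite ?mderiv1 ?mderiv0.
have ltk'n' : (k' < n)%N by rewrite ltn_neqAle nek'n -ltnS.
rewrite coefC -polyC_natr coefC.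
by case: (i == 0)%N; rewrite ?IHn ?mderiv0.
Qed.
End PartialDerivative.

Set Implicit Arguments. Unset Strict Implicit.

Section Derivation.
Variables (P : comPzRingType) (d : P -> P).
Hypothesis dD : {morph d : a b / a + b}.
Hypothesis dM : forall a b, d (a * b) = d a * b + a * d b.

Lemma derivation0 : d 0 = 0.
Proof. by apply: (addrI (d 0)); rewrite -dD !addr0. Qed.

Lemma map_mx_derivM m n p (X : 'M[P]_(m, n)) (Y : 'M[P]_(n, p)) :
  map_mx d (X *m Y) = map_mx d X *m Y + X *m map_mx d Y.
Proof.
apply/matrixP => i j; rewrite !mxE (big_morph d dD derivation0) -big_split /=.
by apply: eq_bigr => k _; rewrite dM !mxE.
Qed.

Lemma mulmx_delta_mxE m n p q (X : 'M[P]_(m, n)) (Y : 'M[P]_(p, q)) a b i j :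
  (X *m delta_mx a b *m Y) i j = X i a * Y b j.
Proof.
rewrite -(mul_delta_mx (0 : 'I_1)) mulmxA -colE -mulmxA -rowE mxE big_ord1.
by rewrite !mxE.
Qed.

(* Multiply the derivative of A adj A = det A by adj A on the right and read the
   entry (i, j); the term det A * d (adj A i j) vanishes with adj A i j. *)
Lemma adj_deriv_delta n (A : 'M[P]_n) a b i j :
  map_mx d A = delta_mx a b -> \adj A i j = 0 -> \adj A i a * \adj A b j = 0.
Proof.
move=> dA adjA0.
have dadj : map_mx d (\adj A) *m A + \adj A *m delta_mx a b = (d (\det A))%:M.
  rewrite -dA -map_mx_derivM mul_adj_mx; apply/matrixP => u v; rewrite !mxE.
  by case: (u == v); rewrite ?mulr1n ?mulr0n ?derivation0.
have := congr1 (fun X => (X *m \adj A) i j) dadj.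
rewrite /= mulmxDl -[_ *m A *m _]mulmxA mul_mx_adj mul_mx_scalar mul_scalar_mx.
rewrite [in X in X = _]mxE mulmx_delta_mxE !mxE; rewrite mxE in adjA0.
by rewrite adjA0 derivation0 !mulr0 add0r.
Qed.
End Derivation.

Section Network.
Variables (R : realFieldType) (M E : nat) (y ybar : 'M[R]_(M, E)).
Local Notation P := (mpoly R (nvars M E)).
Local Notation r_var j m := (mvar R (nvars M E) (j * M + m)%N).

Definition rate_poly : 'M[P]_(E, M) :=
  \matrix_(j < E, m < M) (if inputs y m j then r_var j m else 0).
Definition stoich_poly : 'M[P]_(M, E) := map_mx (mconst (nvars M E)) (stoich y ybar).
Definition Bpoly : 'M[P]_(E + M) := block_mx (- 1%:M) rate_poly stoich_poly 0.

Lemma Bmat_tofrac : Bmat y ybar = map_mx (@FracField.tofrac P) Bpoly.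
Proof.
rewrite /Bmat /Bpoly map_block_mx map_mxN map_mx1 map_mx0; congr block_mx.
  by apply/matrixP => j m; rewrite !mxE; case: ifP; rewrite ?rmorph0.
by apply/matrixP => j m; rewrite !mxE.
Qed.

(* Schur complement: [[-1, R], [S, 0]] = [[1, 0], [-S, 1]] * [[-1, R], [0, SR]]. *)
Lemma det_Bmat_neq0 : regular y ybar -> \det (Bmat y ybar) != 0.
Proof.
move=> reg.
have -> : Bmat y ybar = block_mx 1%:M 0 (- stoichK y ybar) 1%:M *m
              block_mx (- 1%:M) (rate y) 0 (stoichK y ybar *m rate y).
  rewrite mulmx_block !mul1mx !mul0mx !addr0 ?add0r.
  by rewrite mulmxN mulmx1 opprK mulNmx addNr.
rewrite det_mulmx det_lblock det_ublock !det1 mul1r.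
rewrite -(raddfN (@scalar_mx _ E)) det_scalar.
by rewrite mul1r mulf_neq0 // signr_eq0.
Qed.

Lemma influences_adj a b : regular y ybar ->
  influences y ybar a b = (\adj Bpoly b a != 0).
Proof.
move=> /det_Bmat_neq0 detB.
rewrite /influences /zvec mxE -colE mxE oppr_eq0.
rewrite /invmx unitmxE unitfE detB mxE mulf_eq0 invr_eq0 (negbTE detB) /=.
by rewrite Bmat_tofrac -map_mx_adj mxE tofrac_eq0.
Qed.

Lemma r_var_idx_lt (j : 'I_E) (m : 'I_M) : (j * M + m < nvars M E)%N.
Proof. by rewrite /nvars; have := ltn_ord j; have := ltn_ord m; nia. Qed.

Lemma r_var_idx_eq (j j' : 'I_E) (m m' : 'I_M) :
  ((j * M + m)%N == (j' * M + m')%N) = (j == j') && (m == m').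
Proof.
apply/eqP/andP => [eidx|[/eqP -> /eqP -> //]].
have M_gt0 : (0 < M)%N by apply: leq_ltn_trans (ltn_ord m).
have em : (m : nat) = m'.
  by have := congr1 (modn^~ M) eidx; rewrite /= !modnMDl !modn_small.
split; apply/eqP/val_inj => //=.
by have := congr1 (divn^~ M) eidx; rewrite /= !divnMDl // !divn_small // !addn0.
Qed.

Lemma mderiv_Bpoly (j : 'I_E) (m : 'I_M) : inputs y m j ->
  map_mx (mderiv R (nvars M E) (j * M + m)) Bpoly = delta_mx (rxn M j) (met E m).
Proof.
move=> jm; apply/matrixP => u v; rewrite mxE [RHS]mxE.
rewrite -(splitK u) -(splitK v) /Bpoly /rxn /met.
case: (split u) => u'; case: (split v) => v' /=.
- rewrite block_mxEul eq_lshift eq_lrshift andbF !mxE.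
  by case: (u' == v'); rewrite ?mulr1n ?mulr0n ?mderivN ?mderiv1 ?mderiv0 ?oppr0.
- rewrite block_mxEur eq_lshift eq_rshift !mxE.
  case: ifP => [u'v'|]; first by rewrite mderivX ?r_var_idx_lt // r_var_idx_eq.
  by rewrite mderiv0; case: eqP => [->|//]; case: eqP => [->|//]; rewrite jm.
- by rewrite block_mxEdl eq_rlshift !mxE mderivC.
- by rewrite block_mxEdr eq_rlshift mxE mderiv0.
Qed.

Lemma adj_Bpoly_trans (j1 j2 : 'I_E) b :
  \adj Bpoly (rxn M j2) (rxn M j1) != 0 -> \adj Bpoly b (rxn M j2) != 0 ->
  \adj Bpoly b (rxn M j1) != 0.
Proof.
have [-> //|ne] := eqVneq j1 j2.
move=> adj21 adjb2; apply/negP => /eqP adjb1.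
have adj_m1 m : inputs y m j2 -> \adj Bpoly (met E m) (rxn M j1) = 0.
  move=> jm; apply/eqP.
  have := adj_deriv_delta (@mderivD R _ _) (@mderivM R _ _) (mderiv_Bpoly jm) adjb1.
  by move/eqP; rewrite mulf_eq0 (negbTE adjb2).
have := congr1 (fun X : 'M[P]_(E + M) => X (rxn M j2) (rxn M j1)) (mul_mx_adj Bpoly).
rewrite /= [RHS]mxE /rxn eq_lshift eq_sym (negbTE ne) mulr0n.
rewrite mxE big_split_ord /= [X in _ + X]big1 ?addr0; last first.
  move=> m _; rewrite block_mxEur mxE; case: ifP => jm; last by rewrite mul0r.
  by rewrite -/(met E m) adj_m1 ?mulr0.
rewrite (bigD1 j2) //= big1 ?addr0; last first.
  by move=> k nek; rewrite block_mxEul !mxE eq_sym (negbTE nek) mulr0n oppr0 mul0r.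
rewrite block_mxEul !mxE eqxx mulr1n mulN1r => /eqP; rewrite oppr_eq0.
by move: adj21; rewrite mxE /rxn => /negbTE ->.
Qed.

Lemma influences_trans (j1 j2 : 'I_E) b : regular y ybar ->
  inflEE y ybar j1 j2 -> influences y ybar (rxn M j2) b ->
  influences y ybar (rxn M j1) b.
Proof. by move=> reg; rewrite /inflEE !influences_adj //; apply: adj_Bpoly_trans. Qed.
End Network.

(* For infl := inflEE y ybar and inflM := inflEM y ybar, the definitions below
   unfold to approx, eclass, prec, IM, Mnd and Md. *)
Section MutualInfluence.
Variables (M E : nat) (infl : rel 'I_E) (inflM : 'I_E -> 'I_M -> bool).
Hypothesis infl_trans : transitive infl.
Hypothesis inflM_trans : forall j1 j2 m, infl j1 j2 -> inflM j2 m -> inflM j1 m.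

Definition mutual j1 j2 := (j1 == j2) || infl j1 j2 && infl j2 j1.
Definition mutual_class j : {set 'I_E} := [set x | mutual j x].
Definition class_prec (p q : {set 'I_E}) :=
  (p != q) && [exists j in p, exists j' in q, infl j j'].
Definition targets j : {set 'I_M} := [set m | inflM j m].
Definition indirect_targets j : {set 'I_M} :=
  [set m | [exists j', [&& j' \notin mutual_class j, infl j j' & inflM j' m]]].
Definition direct_targets j : {set 'I_M} := targets j :\: indirect_targets j.

Lemma mutual_refl : reflexive mutual.
Proof. by move=> j; rewrite /mutual eqxx. Qed.

Lemma mutual_sym : symmetric mutual.
Proof. by move=> j1 j2; rewrite /mutual eq_sym andbC. Qed.

Lemma mutual_infl j1 j2 : mutual j1 j2 -> j1 != j2 -> infl j1 j2.
Proof. by case/orP => [/eqP ->|/andP[]//]; rewrite eqxx. Qed.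

Lemma infl_mutuall j1 j1' j2 : mutual j1' j1 -> infl j1 j2 -> infl j1' j2.
Proof.
have [-> //|ne] := eqVneq j1' j1.
by move=> /mutual_infl /(_ ne); apply: infl_trans.
Qed.

Lemma infl_mutualr j1 j2 j2' : infl j1 j2 -> mutual j2 j2' -> infl j1 j2'.
Proof.
have [<- //|ne] := eqVneq j2 j2'.
by move=> infl12 /mutual_infl /(_ ne); apply: infl_trans.
Qed.

Lemma mutual_trans : transitive mutual.
Proof.
move=> j2 j1 j3 mu12 mu23; have [-> //|ne12] := eqVneq j1 j2.
have mu32 : mutual j3 j2 by rewrite mutual_sym.
have infl21 : infl j2 j1 by apply: mutual_infl; [rewrite mutual_sym | rewrite eq_sym].
apply/orP; right; apply/andP; split.
- exact: infl_mutualr (mutual_infl mu12 ne12) mu23.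
- exact: infl_mutuall mu32 infl21.
Qed.

Lemma mem_mutual_class j x : (x \in mutual_class j) = mutual j x.
Proof. by rewrite inE. Qed.

Lemma mutual_class_refl j : j \in mutual_class j.
Proof. by rewrite mem_mutual_class mutual_refl. Qed.

Lemma mutual_in_class j x x' :
  x \in mutual_class j -> x' \in mutual_class j -> mutual x x'.
Proof. by rewrite !mem_mutual_class mutual_sym; apply: mutual_trans. Qed.

Lemma mutual_class_eq j x : x \in mutual_class j -> mutual_class x = mutual_class j.
Proof.
move=> xj; apply/setP => x'; rewrite mem_mutual_class.
apply/idP/idP => [ax'|]; last exact: mutual_in_class.
by rewrite mem_mutual_class; apply: mutual_trans ax'; rewrite -mem_mutual_class.
Qed.

Lemma infl_in_class j0 :
  (2 <= #|mutual_class j0|)%N -> {in mutual_class j0 &, forall j j', infl j j'}.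
Proof.
move=> /card_gt1P [x [x' [xj0 x'j0 nexx']]] j j' jj0 j'j0.
have [<-|nejj'] := eqVneq j j'; last exact: mutual_infl (mutual_in_class jj0 j'j0) nejj'.
have [k kj0 nekj] : exists2 k, k \in mutual_class j0 & k != j.
  by have [exj|] := eqVneq x j; [exists x'; rewrite // -exj eq_sym | exists x].
apply: (@infl_trans k); apply: mutual_infl.
- exact: mutual_in_class jj0 kj0.
- by rewrite eq_sym.
- exact: mutual_in_class kj0 jj0.
- exact: nekj.
Qed.

Lemma infl_not_mutual j1 j2 : infl j1 j2 -> ~~ mutual j1 j2 ->
  forall j1' j2', mutual j1' j1 -> mutual j2' j2 -> infl j1' j2' && ~~ infl j2' j1'.
Proof.
move=> infl12 nmu12 j1' j2' mu1 mu2; rewrite mutual_sym in mu2.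
rewrite (infl_mutuall mu1 (infl_mutualr infl12 mu2)) /=; apply: contra nmu12 => infl21.
have infl21' : infl j2 j1 by apply: infl_mutuall mu2 (infl_mutualr infl21 mu1).
by rewrite /mutual infl12 infl21' orbT.
Qed.

Lemma class_prec_irrefl p : ~~ class_prec p p.
Proof. by rewrite /class_prec eqxx. Qed.

Lemma class_prec_trans j1 j2 j3 :
  class_prec (mutual_class j1) (mutual_class j2) ->
  class_prec (mutual_class j2) (mutual_class j3) ->
  class_prec (mutual_class j1) (mutual_class j3).
Proof.
move=> /andP[ne12 /existsP[a /andP[a1 /existsP[b /andP[b2 inflab]]]]].
move=> /andP[_ /existsP[c /andP[c2 /existsP[d /andP[d3 inflcd]]]]].
have inflbd : infl b d := infl_mutuall (mutual_in_class b2 c2) inflcd.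
apply/andP; split; last first.
  apply/existsP; exists a; rewrite a1.
  by apply/existsP; exists d; rewrite d3 (infl_trans inflab).
apply: contra ne12 => /eqP e13.
have d1 : d \in mutual_class j1 by rewrite e13.
have inflba : infl b a := infl_mutualr inflbd (mutual_in_class d1 a1).
have b1 : b \in mutual_class j1.
  by rewrite -(mutual_class_eq a1) mem_mutual_class /mutual inflab inflba orbT.
by rewrite -(mutual_class_eq b1) (mutual_class_eq b2).
Qed.

Lemma infl_class_prec js j : j != js ->
  infl js j =
    (j \in mutual_class js) || class_prec (mutual_class js) (mutual_class j).
Proof.
move=> nejjs; apply/idP/orP => [inflj|[jjs|]].
- have [jjs|njjs] := boolP (j \in mutual_class js); [by left | right].
  apply/andP; split; first by apply: contraNneq njjs => ->; apply: mutual_class_refl.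
  apply/existsP; exists js; rewrite mutual_class_refl.
  by apply/existsP; exists j; rewrite mutual_class_refl.
- by apply: mutual_infl; rewrite -?mem_mutual_class // eq_sym.
move=> /andP[_ /existsP[a /andP[ajs /existsP[b /andP[bj inflab]]]]].
apply: infl_mutuall (mutual_in_class (mutual_class_refl js) ajs) _.
exact: infl_mutualr inflab (mutual_in_class bj (mutual_class_refl j)).
Qed.

Lemma targets_infl j1 j2 : infl j1 j2 -> targets j2 \subset targets j1.
Proof. by move=> infl12; apply/subsetP => m; rewrite !inE; apply: inflM_trans. Qed.

Lemma targets_mutual j1 j2 : mutual j1 j2 -> targets j1 = targets j2.
Proof.
have [-> //|ne] := eqVneq j1 j2 => mu12.
have infl21 : infl j2 j1 by apply: mutual_infl; [rewrite mutual_sym | rewrite eq_sym].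
by apply/eqP; rewrite eqEsubset !targets_infl // mutual_infl.
Qed.

Lemma indirect_targets_sub js : indirect_targets js \subset targets js.
Proof.
apply/subsetP => m; rewrite !inE => /existsP[j /and3P[_ inflj inflMm]].
exact: inflM_trans inflj inflMm.
Qed.

Definition reach_set j : {set 'I_E} := [set x | (j == x) || infl j x].

Lemma reach_set_proper j1 j2 : infl j1 j2 -> ~~ mutual j1 j2 ->
  reach_set j2 \proper reach_set j1.
Proof.
move=> infl12 nmu12; apply/properP; split.
  apply/subsetP => x; rewrite !inE => /orP[/eqP <-|infl2x]; first by rewrite infl12 orbT.
  by rewrite (infl_trans infl12 infl2x) orbT.
exists j1; rewrite !inE ?eqxx //; apply: contra nmu12 => /orP[/eqP <-|infl21].
  exact: mutual_refl.
by rewrite /mutual infl12 infl21 orbT.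
Qed.

(* Pick the witness downstream as far as possible: one with the smallest reach set. *)
Lemma indirect_targets_direct js m : m \in indirect_targets js ->
  exists2 j, (j \notin mutual_class js) && infl js j & m \in direct_targets j.
Proof.
rewrite inE => /existsP[j0 Cj0].
pose C j := [&& j \notin mutual_class js, infl js j & inflM j m].
case: (@arg_minnP _ j0 C (fun j => #|reach_set j|) Cj0).
move=> j /and3P[njs inflj inflMm] jmin.
exists j; first by rewrite njs inflj.
rewrite inE [m \in targets j]inE inflMm andbT inE.
apply/negP => /existsP[k /and3P[nkj inflk inflMk]].
have nkjs : k \notin mutual_class js.
  apply: contra njs => kjs; rewrite mem_mutual_class /mutual inflj /=.
  by rewrite (infl_mutualr inflk (mutual_in_class kjs (mutual_class_refl js))) orbT.
have := jmin k; rewrite /C nkjs (infl_trans inflj inflk) inflMk => /(_ isT).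
by rewrite leqNgt proper_card // reach_set_proper // -mem_mutual_class.
Qed.

Lemma inflM_direct_targets js m :
  inflM js m = (m \in direct_targets js) ||
    [exists j, [&& j \notin mutual_class js, infl js j & m \in direct_targets j]].
Proof.
apply/idP/orP => [inflMm|[|/existsP[j /and3P[_ inflj]]]].
- have [/indirect_targets_direct[j /andP[njs inflj] mMd]|nMnd] :=
    boolP (m \in indirect_targets js).
    by right; apply/existsP; exists j; rewrite njs inflj.
  by left; rewrite inE nMnd inE.
- by rewrite !inE => /andP[].
- by rewrite !inE => /andP[_]; apply: inflM_trans.
Qed.

Lemma targets_direct_decomp js :
  targets js = direct_targets js :|:
    \bigcup_(j | (j \notin mutual_class js) && infl js j) direct_targets j.
Proof.
apply/setP => m; rewrite in_setU inE inflM_direct_targets; congr orb.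
apply/existsP/bigcupP => [[j /and3P[njs inflj mMd]]|[j /andP[njs inflj] mMd]].
  by exists j; rewrite ?njs.
by exists j; rewrite njs inflj.
Qed.
End MutualInfluence.

Theorem theorem2p7 (R : realFieldType) (M E : nat) (y ybar : 'M[R]_(M, E))
  (y_ge0 : forall m j, 0 <= y m j) (ybar_ge0 : forall m j, 0 <= ybar m j)
  (full_rank : \rank (stoich y ybar) = M)
  (reg : regular y ybar) :
  let infl := inflEE y ybar in
  let inflM := inflEM y ybar in
  let appr := approx y ybar in
  let cls := eclass y ybar in
  let prc := prec y ybar in
  (* (a) *)
  [/\ reflexive appr, symmetric appr & transitive appr] /\
  (* (b) *)
  (forall j0 : 'I_E, (2 <= #|cls j0|)%N ->
     forall j j', j \in cls j0 -> j' \in cls j0 -> infl j j') /\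
  (* (c) *)
  ((forall j1 j2, infl j1 j2 -> ~~ appr j1 j2 ->
      forall j1' j2', appr j1' j1 -> appr j2' j2 ->
        infl j1' j2' && ~~ infl j2' j1') /\
   (forall j, ~~ prc (cls j) (cls j)) /\
   (forall j1 j2 j3, prc (cls j1) (cls j2) -> prc (cls j2) (cls j3) ->
      prc (cls j1) (cls j3)) /\
   (forall js j', j' != js ->
      infl js j' = (j' \in cls js) || prc (cls js) (cls j'))) /\
  (* (d) *)
  (forall j1 j2, infl j1 j2 -> IM y ybar j2 \subset IM y ybar j1) /\
  (forall j1 j2, appr j1 j2 -> IM y ybar j1 = IM y ybar j2) /\
  (* (e) *)
  (forall js : 'I_E,
     Mnd y ybar js \subset IM y ybar js /\
     (forall m, inflM js m =
        (m \in Md y ybar js) ||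
        [exists j', [&& j' \notin cls js, infl js j' & m \in Md y ybar j']]) /\
     IM y ybar js =
       Md y ybar js :|: \bigcup_(j' | (j' \notin cls js) && infl js j') Md y ybar j').
Proof.
move=> infl inflM appr cls prc.
have tr : transitive infl by move=> j2 j1 j3; apply: influences_trans reg.
have trM j1 j2 m : infl j1 j2 -> inflM j2 m -> inflM j1 m by apply: influences_trans reg.
split; first by split; [exact: mutual_refl | exact: mutual_sym | exact: mutual_trans tr].
split; first exact: infl_in_class tr.
split.
  split; first exact: infl_not_mutual tr.
  split; first by move=> j; apply: class_prec_irrefl.
  by split; [exact: class_prec_trans tr | exact: infl_class_prec tr].
split; first exact: targets_infl trM.
split; first exact: targets_mutual trM.
move=> js; split; first exact: indirect_targets_sub trM js.
split; first exact: inflM_direct_targets tr trM js.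
exact: targets_direct_decomp tr trM js.
Qed.
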